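(* Let ${\bm{x}}_i^m\in\mathbb{R}^d$ ($m\in[M]$, $i\in[n]$) satisfy $\|{\bm{x}}_i^m\|\le1$ and be linearly separable. Let $\ell(z)=\log(1+e^{-z})$, $F_m({\bm{w}})=\frac1n\sum_i\ell(\langle{\bm{w}},{\bm{x}}_i^m\rangle)$, $F=\frac1M\sum_mF_m$. Run Local GD with any ${\bm{w}}_0$, $\eta>0$, $K\in\mathbb{N}$: ${\bm{w}}_{r,0}^m={\bm{w}}_r$, ${\bm{w}}_{r,k+1}^m={\bm{w}}_{r,k}^m-\eta\nabla F_m({\bm{w}}_{r,k}^m)$ ($k=0,\dots,K-1$), ${\bm{w}}_{r+1}=\frac1M\sum_m{\bm{w}}_{r,K}^m$. If $F({\bm{w}}_r)\le1/(\eta KM)$ for some $r\ge0$, then $\|{\bm{w}}_{r,k}^m-{\bm{w}}_r\|\le1$ for every $m\in[M]$ and $k\in[K]$.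
   Context: Linear separability means there is ${\bm{w}}$ with $\langle{\bm{w}},{\bm{x}}_i^m\rangle>0$ for all $m,i$ (labels absorbed into data). $[K]=\{1,\dots,K\}$. *)

From mathcomp Require Import all_boot all_order all_algebra.
From mathcomp Require Import all_classical all_reals all_analysis.
Set Implicit Arguments. Unset Strict Implicit. Unset Printing Implicit Defensive.
Import Order.TTheory GRing.Theory Num.Theory.
Local Open Scope ring_scope.

Section LocalGD.
Variable R : realType.

Definition inner (d : nat) (u v : 'rV[R]_d) : R := \sum_(j < d) u ord0 j * v ord0 j.
Definition enorm (d : nat) (u : 'rV[R]_d) : R := Num.sqrt (inner u u).

Definition logistic (z : R) : R := ln (1 + expR (- z)).

Variables (d M n : nat) (x : 'I_M -> 'I_n -> 'rV[R]_d).

Definition linsep : Prop := exists w : 'rV[R]_d, forall m i, 0 < inner w (x m i).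

Definition Fm (m : 'I_M) (w : 'rV[R]_d) : R :=
  n%:R^-1 * \sum_(i < n) logistic (inner w (x m i)).
Definition Fobj (w : 'rV[R]_d) : R := M%:R^-1 * \sum_(m < M) Fm m w.

Definition gradFm (m : 'I_M) (w : 'rV[R]_d) : 'rV[R]_d :=
  n%:R^-1 *: \sum_(i < n) ((derive1 logistic (inner w (x m i))) *: x m i).

Definition local_iter (eta : R) (m : 'I_M) (w : 'rV[R]_d) (k : nat) : 'rV[R]_d :=
  iter k (fun v => v - eta *: gradFm m v) w.

Definition round (eta : R) (K : nat) (w : 'rV[R]_d) : 'rV[R]_d :=
  M%:R^-1 *: \sum_(m < M) local_iter eta m w K.

Definition global_iter (eta : R) (K : nat) (w0 : 'rV[R]_d) (r : nat) : 'rV[R]_d :=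
  iter r (round eta K) w0.

End LocalGD.

From mathcomp Require Import all_boot all_order all_algebra.
From mathcomp Require Import all_classical all_reals all_analysis.
From mathcomp Require Import ring lra.
Import Order.TTheory GRing.Theory Num.Theory.
Local Open Scope ring_scope.

(* Since |l'| <= l for the logistic loss l and ||x_i^m|| <= 1, the local
   gradient is bounded by the local loss: ||grad F_m(v)|| <= F_m(v).  Each local
   step therefore moves by at most eta F_m of the current iterate, and it
   suffices that F_m does not increase along the local run, since
   F_m(w_r) <= M F(w_r) <= 1/(eta K) then gives
   ||w_{r,k}^m - w_r|| <= k eta F_m(w_r) <= 1.  Monotonicity comes from the
   local quadratic bound l(z + u) <= l(z) + l'(z) u + 2 |l'(z)| u^2 for
   -u <= 1/2 (concavity of ln and e^u <= 1 + u + 2u^2 for u <= 1/2), which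
   yields F_m(v - eta grad F_m(v)) <= F_m(v) - eta (1 - 2 eta F_m(v)) ||grad F_m(v)||^2
   as long as eta F_m(v) <= 1/2. *)

Section EuclideanInnerProduct.
Context {R : realType} {d : nat}.
Implicit Types (u v w : 'rV[R]_d) (a : R).

Lemma innerC u v : inner u v = inner v u.
Proof. by apply: eq_bigr => j _; rewrite mulrC. Qed.

Lemma innerDl u v w : inner (u + v) w = inner u w + inner v w.
Proof. by rewrite /inner -big_split; apply: eq_bigr => j _; rewrite mxE mulrDl. Qed.

Lemma innerZl a u v : inner (a *: u) v = a * inner u v.
Proof. by rewrite /inner mulr_sumr; apply: eq_bigr => j _; rewrite mxE mulrA. Qed.

Lemma innerBl u v w : inner (u - v) w = inner u w - inner v w.
Proof. by rewrite innerDl -scaleN1r innerZl mulN1r. Qed.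

Lemma innerDr u v w : inner u (v + w) = inner u v + inner u w.
Proof. by rewrite innerC innerDl !(innerC u). Qed.

Lemma innerZr a u v : inner u (a *: v) = a * inner u v.
Proof. by rewrite innerC innerZl innerC. Qed.

Lemma innerBr u v w : inner u (v - w) = inner u v - inner u w.
Proof. by rewrite innerC innerBl !(innerC u). Qed.

Lemma inner0l v : inner 0 v = 0.
Proof. by rewrite -(scale0r 0) innerZl mul0r. Qed.

Lemma inner_suml n (f : 'I_n -> 'rV[R]_d) v :
  inner (\sum_(i < n) f i) v = \sum_(i < n) inner (f i) v.
Proof.
rewrite /inner (exchange_big _ _ _ _ _ (fun i j => f i ord0 j * v ord0 j)).
by apply: eq_bigr => j _; rewrite summxE mulr_suml.
Qed.

Lemma inner_ge0 u : 0 <= inner u u.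
Proof. by apply: sumr_ge0 => j _; rewrite -expr2 sqr_ge0. Qed.

Lemma inner_self_eq0 u : (inner u u == 0) = (u == 0).
Proof.
apply/eqP/eqP => [u0|->]; last exact: inner0l.
apply/rowP => j; rewrite mxE; apply/eqP; rewrite -[_ == 0]orbb -mulf_eq0; apply/eqP.
by apply: (psumr_eq0P _ u0) => // k _; rewrite -expr2 sqr_ge0.
Qed.

Lemma inner_sqr_le u v : inner u v ^+ 2 <= inner u u * inner v v.
Proof.
have [->|u_neq0] := eqVneq u 0; first by rewrite !inner0l expr0n mul0r.
have uu_gt0 : 0 < inner u u by rewrite lt0r inner_self_eq0 u_neq0 inner_ge0.
have := inner_ge0 (inner u u *: v - inner u v *: u).
rewrite !(innerBl, innerBr, innerZl, innerZr) (innerC v u); nra.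
Qed.

Lemma enorm_ge0 u : 0 <= enorm u.
Proof. exact: sqrtr_ge0. Qed.

Lemma enorm_sqr u : enorm u ^+ 2 = inner u u.
Proof. by rewrite sqr_sqrtr // inner_ge0. Qed.

Lemma enorm0 : enorm (0 : 'rV[R]_d) = 0.
Proof. by rewrite /enorm inner0l sqrtr0. Qed.

Lemma enormZ a u : enorm (a *: u) = `|a| * enorm u.
Proof.
by rewrite /enorm innerZl innerZr mulrA -expr2 sqrtrM ?sqr_ge0 // sqrtr_sqr.
Qed.

Lemma abs_inner_le u v : `|inner u v| <= enorm u * enorm v.
Proof.
rewrite -sqrtr_sqr /enorm -sqrtrM ?inner_ge0 // ler_sqrt ?inner_sqr_le //.
by rewrite mulr_ge0 ?inner_ge0.
Qed.

Lemma enormD u v : enorm (u + v) <= enorm u + enorm v.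
Proof.
rewrite -[leRHS]ger0_norm ?addr_ge0 ?enorm_ge0 // -sqrtr_sqr ler_sqrt ?sqr_ge0 //.
rewrite !(innerDl, innerDr) sqrrD !enorm_sqr (innerC v u).
have := abs_inner_le u v; have := ler_norm (inner u v); lra.
Qed.

Lemma enorm_sum n (f : 'I_n -> 'rV[R]_d) :
  enorm (\sum_(i < n) f i) <= \sum_(i < n) enorm (f i).
Proof.
elim/big_ind2: _ => [|u1 u2 a1 a2 le1 le2|i _ //]; first by rewrite enorm0.
exact: le_trans (enormD _ _) (lerD le1 le2).
Qed.

End EuclideanInnerProduct.

Section Logistic.
Context {R : realType}.
Implicit Types z u : R.

Definition logistic_slope z : R := expR (- z) / (1 + expR (- z)).

Lemma derive1_logistic z : derive1 (@logistic R) z = - logistic_slope z.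
Proof.
have expN_gt0 : 0 < 1 + expR (- z) by rewrite addr_gt0 ?expR_gt0.
have dexpN : is_derive z 1 (fun z : R => expR (- z)) (expR (- z) * -1).
  exact: (@is_derive1_comp _ expR -%R).
have d1expN : is_derive z 1 (fun z : R => 1 + expR (- z)) (expR (- z) * -1).
  by rewrite -[X in is_derive _ _ _ X]add0r; apply: is_deriveD.
have := @is_derive1_comp _ (@ln R) (fun z => 1 + expR (- z)) _ _ _
  (is_derive1_ln expN_gt0) d1expN.
by move=> dlogistic; rewrite derive1E [LHS]derive_val mulrN1 mulrN mulrC.
Qed.

Lemma logistic_ge0 z : 0 <= logistic z.
Proof. by rewrite ln_ge0 // lerDl expR_ge0. Qed.

Lemma logistic_slope_ge0 z : 0 <= logistic_slope z.
Proof. by rewrite divr_ge0 ?addr_ge0 ?expR_ge0. Qed.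

Lemma logistic_slope_lt1 z : logistic_slope z < 1.
Proof. by rewrite ltr_pdivrMr ?mul1r ?ltrDr ?ltr01 // addr_gt0 ?expR_gt0. Qed.

Lemma logistic_slope_le z : logistic_slope z <= logistic z.
Proof.
have expN_gt0 : 0 < 1 + expR (- z) by rewrite addr_gt0 ?expR_gt0.
have one_sub_slope : 1 - logistic_slope z = (1 + expR (- z))^-1.
  by rewrite /logistic_slope; field; rewrite gt_eqF.
have := le_ln1Dx (_ : -1 < - logistic_slope z); rewrite ltrN2 => /(_ (logistic_slope_lt1 z)).
by rewrite one_sub_slope lnV ?posrE // lerN2.
Qed.

Lemma expR_le_quadratic u : u <= 2^-1 -> expR u <= 1 + u + 2 * u ^+ 2.
Proof.
move=> u_le_half; have one_sub_gt0 : 0 < 1 - u by lra.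
rewrite -(ler_pM2r one_sub_gt0).
have -> : (1 + u + 2 * u ^+ 2) * (1 - u) = 1 + u ^+ 2 * (1 - 2 * u) by ring.
apply: le_trans (_ : 1 <= _); last by rewrite lerDl mulr_ge0 ?sqr_ge0 //; lra.
rewrite -[leRHS](expRxMexpNx_1 u) ler_pM2l ?expR_gt0 //; exact: expR_ge1Dx.
Qed.

Lemma logistic_shift_le z u :
  logistic (z + u) <= logistic z + logistic_slope z * (expR (- u) - 1).
Proof.
set t := expR (- z); set s := logistic_slope z.
have t_gt0 : 0 < 1 + t by rewrite addr_gt0 ?expR_gt0.
have s_ge0 : 0 <= s := logistic_slope_ge0 z.
have s_lt1 : s < 1 := logistic_slope_lt1 z.
have factor : 1 + t * expR (- u) = (1 + t) * (1 + s * (expR (- u) - 1)).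
  by rewrite /s /logistic_slope -/t; field; rewrite gt_eqF.
have shift_gt : -1 < s * (expR (- u) - 1).
  have := expR_gt0 (- u); nra.
rewrite /logistic opprD expRD -/t factor lnM ?posrE //; last lra.
by rewrite lerD2l le_ln1Dx.
Qed.

Lemma logistic_quadratic_ub z u : - u <= 2^-1 ->
  logistic (z + u) <= logistic z - logistic_slope z * u + 2 * logistic_slope z * u ^+ 2.
Proof.
move=> u_ge; apply: le_trans (logistic_shift_le z u) _.
have := ler_wpM2l (logistic_slope_ge0 z) (expR_le_quadratic _ u_ge).
rewrite sqrrN; lra.
Qed.

End Logistic.

Section LocalGD.
Context {R : realType} {d M n : nat} (x : 'I_M -> 'I_n -> 'rV[R]_d).
Implicit Types (m : 'I_M) (w v : 'rV[R]_d) (eta : R).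

Lemma Fm_ge0 m w : 0 <= Fm x m w.
Proof. by rewrite mulr_ge0 ?invr_ge0 ?sumr_ge0 // => i _; exact: logistic_ge0. Qed.

Lemma Fm_le_Fobj m w : Fm x m w <= M%:R * Fobj x w.
Proof.
have M_gt0 : (0 < M)%N := leq_ltn_trans (leq0n m) (ltn_ord m).
rewrite /Fobj mulrA mulfV ?pnatr_eq0 -?lt0n // mul1r (bigD1 m) //= lerDl.
by apply: sumr_ge0 => i _; exact: Fm_ge0.
Qed.

Lemma gradFmE m w : gradFm x m w =
  - (n%:R^-1 *: \sum_(i < n) logistic_slope (inner w (x m i)) *: x m i).
Proof.
rewrite /gradFm -scalerN -sumrN; congr (_ *: _); apply: eq_bigr => i _.
by rewrite derive1_logistic scaleNr.
Qed.

Lemma inner_gradFml m w v : inner (gradFm x m w) v =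
  - (n%:R^-1 * \sum_(i < n) logistic_slope (inner w (x m i)) * inner (x m i) v).
Proof.
rewrite gradFmE -scaleN1r innerZl innerZl inner_suml mulN1r.
by congr (- (_ * _)); apply: eq_bigr => i _; rewrite innerZl.
Qed.

Lemma local_iterS eta m w k :
  local_iter x eta m w k.+1 =
    local_iter x eta m w k - eta *: gradFm x m (local_iter x eta m w k).
Proof. by []. Qed.

Hypothesis x_le1 : forall m i, enorm (x m i) <= 1.

Lemma abs_inner_x_le m i v : `|inner (x m i) v| <= enorm v.
Proof.
apply: le_trans (abs_inner_le _ _) _.
by rewrite ler_piMl ?enorm_ge0.
Qed.

Lemma enorm_gradFm_le m w : enorm (gradFm x m w) <= Fm x m w.
Proof.
rewrite gradFmE -scaleN1r !enormZ normrN1 mul1r ger0_norm ?invr_ge0 //.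
apply: ler_wpM2l; first by rewrite invr_ge0.
apply: le_trans (enorm_sum _ _) _; apply: ler_sum => i _.
rewrite enormZ ger0_norm ?logistic_slope_ge0 //.
apply: le_trans (logistic_slope_le _); rewrite ler_piMr ?logistic_slope_ge0 //.
Qed.

Lemma logistic_gradient_step_le m w eta i :
  0 <= eta -> eta * Fm x m w <= 2^-1 ->
  logistic (inner (w - eta *: gradFm x m w) (x m i)) <=
    logistic (inner w (x m i))
    + eta * (logistic_slope (inner w (x m i)) * inner (x m i) (gradFm x m w))
    + 2 * eta ^+ 2 * (logistic (inner w (x m i)) * inner (gradFm x m w) (gradFm x m w)).
Proof.
move=> eta_ge0 etaF_le; set g := gradFm x m w; set z := inner w (x m i).
set a := inner (x m i) g.
have a_le : `|a| <= enorm g := abs_inner_x_le m i g.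
have step_small : - - (eta * a) <= 2^-1.
  rewrite opprK; apply: le_trans etaF_le; apply: ler_wpM2l => //.
  exact: le_trans (ler_norm a) (le_trans a_le (enorm_gradFm_le m w)).
have slope_sqr_le : logistic_slope z * a ^+ 2 <= logistic z * inner g g.
  apply: ler_pM; rewrite ?logistic_slope_ge0 ?sqr_ge0 ?logistic_slope_le //.
  by rewrite -enorm_sqr -(real_normK (num_real a)) ler_sqr ?nnegrE ?enorm_ge0.
rewrite innerBl innerZl (innerC g) -/z -/a.
apply: le_trans (logistic_quadratic_ub z _ step_small) _.
have coef_ge0 : 0 <= 2 * eta ^+ 2 by rewrite mulr_ge0 ?sqr_ge0.
have := ler_wpM2l coef_ge0 slope_sqr_le; rewrite sqrrN exprMn; lra.
Qed.

Lemma Fm_gradient_step_le m w eta : 0 <= eta -> eta * Fm x m w <= 2^-1 ->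
  Fm x m (w - eta *: gradFm x m w) <=
    Fm x m w - eta * (1 - 2 * eta * Fm x m w) * inner (gradFm x m w) (gradFm x m w).
Proof.
move=> eta_ge0 etaF_le; set g := gradFm x m w.
have sum_le : \sum_(i < n) _ <= \sum_(i < n) _ :=
  ler_sum _ (fun i _ => logistic_gradient_step_le m w eta i eta_ge0 etaF_le).
rewrite !big_split /= -!mulr_sumr -mulr_suml -/g in sum_le.
have grad_sqr : n%:R^-1 * \sum_(i < n) logistic_slope (inner w (x m i)) * inner (x m i) g
    = - inner g g by rewrite /g inner_gradFml opprK.
have n_inv_ge0 : 0 <= n%:R^-1 :> R by rewrite invr_ge0.
apply: le_trans (ler_wpM2l n_inv_ge0 sum_le) _.
set L := \sum_(i < n) _; set B := \sum_(i < n) _ in grad_sqr *.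
have -> : n%:R^-1 * (L + eta * B + 2 * eta ^+ 2 * (L * inner g g)) =
    Fm x m w + eta * (n%:R^-1 * B) + 2 * eta ^+ 2 * Fm x m w * inner g g.
  by rewrite /Fm -/L; ring.
rewrite grad_sqr; lra.
Qed.

Lemma Fm_local_iter_le m w eta k : 0 <= eta -> 2 * eta * Fm x m w <= 1 ->
  Fm x m (local_iter x eta m w k) <= Fm x m w.
Proof.
move=> eta_ge0 etaF_le; elim: k => [//|k IHk]; rewrite local_iterS.
set v := local_iter x eta m w k in IHk *.
have etaFv_le : 2 * eta * Fm x m v <= 1.
  by apply: le_trans etaF_le; rewrite ler_wpM2l ?mulr_ge0.
apply: le_trans (Fm_gradient_step_le m v eta eta_ge0 _) _; first lra.
have : 0 <= eta * (1 - 2 * eta * Fm x m v) * inner (gradFm x m v) (gradFm x m v).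
  by rewrite !mulr_ge0 ?inner_ge0 ?subr_ge0.
lra.
Qed.

Lemma enorm_local_iter_sub_le m w eta k : 0 <= eta ->
  enorm (local_iter x eta m w k - w) <=
    \sum_(j < k) eta * Fm x m (local_iter x eta m w j).
Proof.
move=> eta_ge0; elim: k => [|k IHk]; first by rewrite subrr enorm0 big_ord0.
rewrite big_ord_recr local_iterS addrAC -scaleNr.
apply: le_trans (enormD _ _) (lerD IHk _).
by rewrite enormZ normrN ger0_norm ?ler_wpM2l ?enorm_gradFm_le.
Qed.

End LocalGD.

Theorem lemma4p7 (R : realType) (d M n : nat) (x : 'I_M -> 'I_n -> 'rV[R]_d)
  (hx : forall m i, enorm (x m i) <= 1) (hsep : linsep x)
  (w0 : 'rV[R]_d) (eta : R) (heta : 0 < eta) (K r : nat)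
  (hF : Fobj x (global_iter x eta K w0 r) <= (eta * K%:R * M%:R)^-1) :
  forall (m : 'I_M) (k : nat), (1 <= k <= K)%N ->
    enorm (local_iter x eta m (global_iter x eta K w0 r) k
           - global_iter x eta K w0 r) <= 1.
Proof.
move=> m k /andP[k_gt0 le_kK]; set w := global_iter x eta K w0 r in hF *.
have etaK_gt0 : 0 < eta * K%:R by rewrite mulr_gt0 ?ltr0n ?(leq_trans k_gt0).
have etaKF_le1 : eta * K%:R * Fm x m w <= 1.
  apply: le_trans (ler_wpM2l (ltW etaK_gt0) (Fm_le_Fobj x m w)) _.
  have M_gt0 : (0 < M)%N := leq_ltn_trans (leq0n m) (ltn_ord m).
  by rewrite mulrA -ler_pdivlMl ?mulr1 // mulr_gt0 ?ltr0n.
have Fm_iter_le j : (j < K)%N -> Fm x m (local_iter x eta m w j) <= Fm x m w.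
  (* a second local step only exists when 2 <= K *)
  case: j => [//|j] lt_jK; apply: (Fm_local_iter_le x hx _ _ _ _ (ltW heta)).
  apply: le_trans etaKF_le1; apply: ler_wpM2r; first exact: Fm_ge0.
  by rewrite mulrC ler_pM2l // ler_nat (leq_ltn_trans _ lt_jK).
apply: le_trans (enorm_local_iter_sub_le x hx m w eta k (ltW heta)) _.
apply: le_trans etaKF_le1.
have term_le (j : 'I_k) : eta * Fm x m (local_iter x eta m w j) <= eta * Fm x m w.
  by rewrite ler_pM2l // Fm_iter_le // (leq_trans (ltn_ord j)).
apply: le_trans (ler_sum _ (fun j _ => term_le j)) _.
rewrite sumr_const card_ord [leRHS]mulrAC -[_ *+ k]mulr_natr.
apply: ler_wpM2l; last by rewrite ler_nat.
by rewrite mulr_ge0 ?Fm_ge0 ?ltW.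
Qed.
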